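(* Let $\mu$ be a strict partition and $g$ a function from strict partitions to $\mathbb{C}$. For $n\ge0$ let $$A(n)=\sum_{|\lambda/\mu|=n}f'_{\lambda/\mu}\,g(\lambda),\qquad B(n)=\sum_{|\lambda/\mu|=n}f'_{\lambda/\mu}\,Dg(\lambda),$$ the sums ranging over strict partitions $\lambda\supseteq\mu$ with $|\lambda|-|\mu|=n$. Then $A(n)=A(0)+\sum_{k=0}^{n-1}B(k)$ for all $n\ge0$.
   Context: A strict partition is a finite strictly decreasing sequence of positive integers $\lambda=(\lambda_1>\cdots>\lambda_\ell)$ (the empty sequence is allowed); $|\lambda|=\sum_i\lambda_i$, $\ell(\lambda)=\ell$, and $\lambda_i=0$ for $i>\ell(\lambda)$. The (shifted Young) diagram of $\lambda$ is the set of boxes $(i,j)$ with $1\le i\le\ell(\lambda)$, $i+1\le j\le i+\lambda_i$; $\lambda$ is identified with its diagram. Write $\lambda\supseteq\mu$ if $\lambda_i\ge\mu_i$ for all $i$; $\lambda/\mu$ is the set of boxes of $\lambda$ not in $\mu$, and $|\lambda/\mu|=|\lambda|-|\mu|$. $f_{\lambda/\mu}$ is the number of standard shifted Young tableaux of shape $\lambda/\mu$, i.e. bijective fillings of the boxes of $\lambda/\mu$ with $1,\dots,|\lambda/\mu|$ increasing from left to right along rows and from top to bottom along columns ($f_{\mu/\mu}=1$), and $f'_{\lambda/\mu}=2^{|\lambda|-|\mu|-\ell(\lambda)+\ell(\mu)}f_{\lambda/\mu}$. For a strict partition $\lambda$, $\lambda^+$ denotes any strict partition obtained from $\lambda$ by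 adding one box ($\lambda^+\supseteq\lambda$, $|\lambda^+|=|\lambda|+1$). The difference operator $D$ on functions $g$ of strict partitions is $$Dg(\lambda)=\sum_{\lambda^+:\ \ell(\lambda^+)>\ell(\lambda)}g(\lambda^+)+2\sum_{\lambda^+:\ \ell(\lambda^+)=\ell(\lambda)}g(\lambda^+)-g(\lambda).$$ *)

From mathcomp Require Import all_boot all_order all_algebra.
From mathcomp Require Import fingroup perm complex Rstruct.
Set Implicit Arguments. Unset Strict Implicit. Unset Printing Implicit Defensive.
Import GRing.Theory Num.Theory.

Definition Cplx := (Rdefinitions.R)[i].

Definition is_strict (l : seq nat) : bool :=
  sorted (fun a b => b < a) l && all (fun x => 0 < x) l.

Definition psize (l : seq nat) : nat := sumn l.

(* lambda_i (1-based index), = 0 beyond the length *)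
Definition part (l : seq nat) (i : nat) : nat := nth 0 l i.-1.

Definition contains (l m : seq nat) : bool :=
  all (fun i => part m i <= part l i) (iota 1 (size m)).

(* Boxes (i,j) of the shifted skew diagram l/m (assuming l ⊇ m):
   1 <= i <= size l, i + m_i + 1 <= j <= i + l_i. *)
Definition skew_boxes (l m : seq nat) : seq (nat * nat) :=
  [seq (i, j) | i <- iota 1 (size l),
                j <- iota (i + part m i).+1 (part l i - part m i)].

(* Standard shifted tableaux of shape l/m: bijective fillings of the boxes
   (listed as skew_boxes l m, box number k) with 1..N (box k gets s k + 1),
   increasing along rows (left to right) and columns (top to bottom). *)
Definition std_filling (B : seq (nat * nat)) (s : {perm 'I_(size B)}) : bool :=
  [forall k : 'I_(size B), forall k' : 'I_(size B),
     let b := nth (0, 0) B k in let b' := nth (0, 0) B k' in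
     ((b.1 == b'.1) && (b.2 < b'.2) ==> (s k < s k')) &&
     ((b.2 == b'.2) && (b.1 < b'.1) ==> (s k < s k'))].

Definition f_skew (l m : seq nat) : nat :=
  #|[set s : {perm 'I_(size (skew_boxes l m))} | std_filling s]|.

(* f'_{l/m} = 2^(|l| - |m| - size l + size m) f_{l/m} (exponent is >= 0 when l ⊇ m) *)
Definition f'_skew (l m : seq nat) : Cplx :=
  (2 ^+ ((psize l + size m) - (psize m + size l)) * (f_skew l m)%:R)%R.

Definition sp_of_set (M : nat) (S : {set 'I_M.+1}) : seq nat :=
  sort geq [seq val i | i <- enum S].

(* All strict partitions of size M (each exactly once): a strict partition of M
   is determined by its set of parts, a subset of {1,...,M}. *)
Definition strict_parts (M : nat) : seq (seq nat) :=
  [seq sp_of_set X | X <- enum [pred X : {set 'I_M.+1} |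
                                 is_strict (sp_of_set X) && (psize (sp_of_set X) == M)]].

Definition Dop (g : seq nat -> Cplx) (l : seq nat) : Cplx :=
  (\sum_(lp <- strict_parts (psize l).+1 | contains lp l && (size l < size lp)%N) g lp
   + 2 * \sum_(lp <- strict_parts (psize l).+1 | contains lp l && (size lp == size l)%N) g lp
   - g l)%R.

Definition skew_sum (m : seq nat) (h : seq nat -> Cplx) (n : nat) : Cplx :=
  (\sum_(l <- strict_parts (psize m + n) | contains l m) f'_skew l m * h l)%R.

(* Exchange the summations in B(n).  For |lp/mu| = n + 1, the coefficient of g(lp) is the sum
   of f'_{l/mu} w(l, lp) over the strict l containing mu obtained from lp by deleting one corner
   box, where w = 1 if that box formed a whole last row and w = 2 otherwise.  These weights make
   up exactly for the change in the power of 2 between f'_{l/mu} and f'_{lp/mu}, so the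
   coefficient equals f'_{lp/mu} by the recursion f_{lp/mu} = sum_l f_{l/mu}, which comes from
   deleting the box holding the largest entry of a standard tableau (the boxes that can hold it
   are exactly the maximal ones).  Hence A(n + 1) = A(n) + B(n). *)

From mathcomp Require Import all_boot all_order all_algebra.
From mathcomp Require Import fingroup perm complex Rstruct.
From mathcomp Require Import zify ring.
Set Implicit Arguments. Unset Strict Implicit. Unset Printing Implicit Defensive.
Import GRing.Theory.

Definition linexts n (r : rel nat) : {set 'S_n} :=
  [set s : 'S_n | [forall a : 'I_n, forall b : 'I_n, r a b ==> (s a < s b)]].

Lemma eq_card_linexts n (r r' : rel nat) :
  (forall a b, a < n -> b < n -> r a b = r' a b) -> #|linexts n r| = #|linexts n r'|.
Proof.
move=> rr'; apply: eq_card => s; rewrite !inE.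
by apply: eq_forallb => a; apply: eq_forallb => b; rewrite rr'.
Qed.

Lemma lift_perm_inj n (i j : 'I_n.+1) : injective (lift_perm i j).
Proof.
move=> s t st; apply/permP => k; apply: (@lift_inj _ j).
by rewrite -!(lift_perm_lift i) st.
Qed.

Lemma lift_perm_onto n (i j : 'I_n.+1) (s : 'S_n.+1) :
  s i = j -> exists t, s = lift_perm i j t.
Proof.
move=> sij; pose f k := odflt k (unlift j (s (lift i k))).
have fK k : lift j (f k) = s (lift i k).
  have : j != s (lift i k) by rewrite -sij (inj_eq perm_inj) neq_lift.
  by rewrite /f => /unlift_some[k' -> _]; rewrite liftK.
have f_inj : injective f.
  by move=> k k' /(congr1 (lift j)); rewrite !fK => /perm_inj /lift_inj.
exists (perm f_inj); apply/permP => k.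
case: (unliftP i k) => [k'|] ->.
  by rewrite lift_perm_lift permE fK.
by rewrite lift_perm_id.
Qed.

Lemma card_lift_perm n (i j : 'I_n.+1) (P : pred 'S_n.+1) :
  #|[set s : 'S_n.+1 | (s i == j) && P s]| = #|[set t : 'S_n | P (lift_perm i j t)]|.
Proof.
rewrite -(card_imset _ (@lift_perm_inj n i j)); apply: eq_card => s; rewrite inE.
apply/andP/imsetP => [[/eqP /lift_perm_onto[t ->] Pt]|[t]].
  by exists t; rewrite ?inE.
by rewrite inE => Pt ->; rewrite lift_perm_id.
Qed.

Lemma lift_perm_linexts n (r : rel nat) k (t : 'S_n) :
  (lift_perm k ord_max t \in linexts n.+1 r) =
  [forall b : 'I_n.+1, ~~ r k b] && (t \in linexts n (fun a b => r (bump k a) (bump k b))).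
Proof.
rewrite !inE; apply/forallP/andP => [H|[/forallP kmax /forallP H] a].
  split.
    apply/forallP => b; apply/negP => rkb; have := implyP (forallP (H k) b) rkb.
    by rewrite lift_perm_id /= ltnNge -ltnS ltn_ord.
  apply/forallP => a; apply/forallP => b; apply/implyP => rab.
  by have := implyP (forallP (H (lift k a)) (lift k b)) rab; rewrite !lift_perm_lift !lift_max.
apply/forallP => b; apply/implyP.
case: (unliftP k a) => [a'|] ->; last by rewrite (negbTE (kmax b)).
case: (unliftP k b) => [b'|] -> rab; last by rewrite lift_perm_lift lift_perm_id lift_max /=.
by rewrite !lift_perm_lift !lift_max; exact: (implyP (forallP (H a') b') rab).
Qed.

Lemma card_linexts_rec n (r : rel nat) :
  #|linexts n.+1 r| = \sum_(k < n.+1 | [forall b : 'I_n.+1, ~~ r k b])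
                        #|linexts n (fun a b => r (bump k a) (bump k b))|.
Proof.
rewrite -sum1_card (partition_big (fun s : 'S_n.+1 => s^-1%g ord_max) predT) //=.
rewrite [RHS]big_mkcond; apply: eq_bigr => k _ /=.
rewrite (eq_bigl (fun s : 'S_n.+1 => (s k == ord_max) && (s \in linexts n.+1 r))); last first.
  by move=> s; rewrite andbC; congr (_ && _); apply/eqP/eqP => <-; rewrite ?permKV ?permK.
rewrite sum1dep_card card_lift_perm; case: ifP => k_max.
  by apply: eq_card => t; rewrite inE lift_perm_linexts k_max.
by apply: eq_card0 => t; rewrite inE lift_perm_linexts k_max.
Qed.

Lemma nth_rem_uniq (T : eqType) (x0 : T) (s : seq T) k a : uniq s -> k < size s ->
  nth x0 (rem (nth x0 s k) s) a = nth x0 s (bump k a).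
Proof.
move=> us ks; rewrite remE index_uniq // nth_cat size_take ks /bump.
case: ltnP => ak; first by rewrite nth_take.
by rewrite nth_drop addSn subnKC.
Qed.

Lemma rem_cat (T : eqType) (x : T) s1 s2 :
  rem x (s1 ++ s2) = if x \in s1 then rem x s1 ++ s2 else s1 ++ rem x s2.
Proof.
elim: s1 => //= y s1 IH; rewrite in_cons eq_sym; case: eqP => //= _.
by rewrite IH; case: (x \in s1).
Qed.

Lemma rem_rcons (T : eqType) (x : T) s : x \notin s -> rem x (rcons s x) = s.
Proof.
elim: s => /= [|y s IH]; first by rewrite eqxx.
by rewrite in_cons negb_or eq_sym => /andP[/negbTE -> /IH ->].
Qed.

Lemma ltn_sum_exists K (a b : 'I_K -> nat) :
  \sum_i a i < \sum_i b i -> exists j, a j < b j.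
Proof.
case: (pickP (fun i => a i < b i)) => [j ?|no_lt] lt_sum; first by exists j.
suff : \sum_i b i <= \sum_i a i by rewrite leqNgt lt_sum.
by apply: leq_sum => i _; rewrite leqNgt no_lt.
Qed.

Lemma leq_sum_eq K (a b : 'I_K -> nat) :
  (forall i, a i <= b i) -> \sum_i b i <= \sum_i a i -> a =1 b.
Proof.
move=> le_ab le_sum i; apply/eqP; rewrite eqn_leq le_ab /=.
move: le_sum; rewrite (bigD1 i) //= [X in _ <= X](bigD1 i) //= => le_sum.
rewrite -(leq_add2r (\sum_(k < K | k != i) a k)); apply: leq_trans le_sum.
by rewrite leq_add2l; apply: leq_sum.
Qed.

Lemma sum_eq_succ K (a b : 'I_K -> nat) :
  (forall i, a i <= b i) -> \sum_i b i = (\sum_i a i).+1 ->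
  exists j, b j = (a j).+1 /\ forall i, i != j -> b i = a i.
Proof.
move=> le_ab sum_ab; have [j lt_j] : exists j, a j < b j by apply: ltn_sum_exists; rewrite sum_ab.
pose a' i := a i + (i == j).
have eq_a'b : a' =1 b.
  apply: leq_sum_eq => [i|]; first by rewrite /a'; case: eqP => [->|_]; rewrite ?addn1 ?addn0.
  have sum_delta : \sum_i (i == j : nat) = 1.
    by rewrite (bigD1 j) //= eqxx big1 // => i ij; rewrite (negbTE ij).
  by rewrite sum_ab big_split /= sum_delta addn1.
exists j; split=> [|i ij]; rewrite -eq_a'b /a' ?eqxx ?(negbTE ij) ?addn1 ?addn0 //.
Qed.

Definition box_lt (b b' : nat * nat) : bool :=
  ((b.1 == b'.1) && (b.2 < b'.2)) || ((b.2 == b'.2) && (b.1 < b'.1)).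

Definition box_maximal (B : seq (nat * nat)) (b : nat * nat) : bool :=
  all (fun b' => ~~ box_lt b b') B.

Definition nstd (B : seq (nat * nat)) : nat :=
  #|linexts (size B) (fun i j => box_lt (nth (0, 0) B i) (nth (0, 0) B j))|.

Lemma f_skewE l m : f_skew l m = nstd (skew_boxes l m).
Proof.
apply: eq_card => s; rewrite !inE /std_filling.
apply: eq_forallb => a; apply: eq_forallb => b /=.
by rewrite /box_lt; case: (s a < s b); rewrite ?implybT //= !implybF negb_or.
Qed.

Lemma nstd_rec B : 0 < size B -> uniq B ->
  nstd B = \sum_(b <- B | box_maximal B b) nstd (rem b B).
Proof.
case def_B : (size B) => [|N] // _ uB; rewrite /nstd def_B card_linexts_rec.
rewrite (big_nth (0, 0)) def_B big_mkord; apply: eq_big => [k|k _].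
  apply/forallP/(all_nthP (0, 0)) => H i; last by apply: H; rewrite def_B.
  by rewrite def_B => ltiN; exact: (H (Ordinal ltiN)).
have kB : k < size B by rewrite def_B.
rewrite size_rem ?mem_nth // def_B; apply: eq_card_linexts => a b aN bN.
by rewrite !nth_rem_uniq // def_B.
Qed.

Lemma is_strictP l :
  reflect ((forall i, i < size l -> 0 < nth 0 l i) /\
           (forall i, i.+1 < size l -> nth 0 l i.+1 < nth 0 l i))
          (is_strict l).
Proof.
apply: (iffP andP) => [[/(sortedP 0) ? /(all_nthP 0) ?]|[? ?]] //.
by split; [apply/(sortedP 0) | apply/(all_nthP 0)].
Qed.

Section StrictPartition.

Variable l : seq nat.
Hypothesis sl : is_strict l.

Lemma strict_nth_gt0 i : (0 < nth 0 l i) = (i < size l).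
Proof.
case: (ltnP i (size l)) => il; last by rewrite nth_default.
by case/is_strictP: sl => pos _; rewrite pos.
Qed.

Lemma strict_nth_ltS i : i.+1 < size l -> nth 0 l i.+1 < nth 0 l i.
Proof. by case/is_strictP: sl => _; apply. Qed.

Lemma strict_nth_gap a b : a <= b -> b < size l -> nth 0 l b + b <= nth 0 l a + a.
Proof.
elim: b => [|b IH]; first by rewrite leqn0 => /eqP->.
rewrite leq_eqVlt => /orP[/eqP-> //|ab] bl.
by have := IH ab (ltnW bl); have := strict_nth_ltS bl; lia.
Qed.

Lemma strict_last_one j : j < size l -> nth 0 l j = 1 -> size l = j.+1.
Proof.
move=> jl lj1; apply/eqP; rewrite eqn_leq jl andbT leqNgt; apply/negP => j1l.
by have := strict_nth_ltS j1l; rewrite lj1 ltnS leqNgt strict_nth_gt0 j1l.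
Qed.

End StrictPartition.

Lemma strict_eq_nth a b : is_strict a -> is_strict b -> nth 0 a =1 nth 0 b -> a = b.
Proof.
have le_size x y : is_strict x -> is_strict y -> nth 0 x =1 nth 0 y -> size x <= size y.
  by move=> sx sy xy; rewrite leqNgt -(strict_nth_gt0 sx) xy (strict_nth_gt0 sy) ltnn.
move=> sa sb ab; have size_ab : size a = size b.
  by apply/eqP; rewrite eqn_leq !le_size // => i; rewrite ab.
by apply: (eq_from_nth size_ab) => i _; apply: ab.
Qed.

Lemma containsP l m : reflect (forall i, nth 0 m i <= nth 0 l i) (contains l m).
Proof.
apply: (iffP allP) => [lm i|lm i]; last by rewrite mem_iota => /andP[i1 _]; exact: lm.
case: (ltnP i (size m)) => im; last by rewrite nth_default.
by apply: (lm i.+1); rewrite mem_iota add1n ltnS.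
Qed.

Lemma contains_trans l1 l2 l3 : contains l1 l2 -> contains l2 l3 -> contains l1 l3.
Proof.
by move=> /containsP h12 /containsP h23; apply/containsP => i; apply: leq_trans (h23 i) (h12 i).
Qed.

Lemma size_contains l m : is_strict m -> contains l m -> size m <= size l.
Proof.
move=> sm /containsP lm; rewrite leqNgt; apply/negP => lt_lm.
by have := lm (size l); rewrite (nth_default _ (leqnn _)) leqNgt strict_nth_gt0 // lt_lm.
Qed.

Lemma psize_sum l K : size l <= K -> psize l = \sum_(i < K) nth 0 l i.
Proof.
move=> lK; rewrite /psize sumnE (big_nth 0) big_mkord -(subnKC lK) big_split_ord /=.
by rewrite [X in _ + X]big1 ?addn0 // => i _; rewrite nth_default // leq_addr.
Qed.

Lemma strict_parts_uniq M : uniq (strict_parts M).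
Proof.
rewrite map_inj_uniq ?enum_uniq // => X Y XY; apply/setP => i.
have : (val i \in sp_of_set X) = (val i \in sp_of_set Y) by rewrite XY.
by rewrite !mem_sort !(mem_map val_inj) !mem_enum.
Qed.

Lemma mem_strict_parts M l : (l \in strict_parts M) = is_strict l && (psize l == M).
Proof.
apply/mapP/andP => [[X]|[sl /eqP lM]]; first by rewrite mem_enum inE => /andP[? ?] ->.
have l_bound x : x \in l -> x < M.+1.
  by rewrite -lM /psize ltnS; elim: (l) => //= y s IH; rewrite in_cons => /orP[/eqP->|/IH]; lia.
suff sp_l : sp_of_set [set i : 'I_M.+1 | val i \in l] = l.
  by exists [set i : 'I_M.+1 | val i \in l]; rewrite // mem_enum inE sp_l sl lM /=.
have /andP[l_uniq l_sorted] : uniq l && sorted geq l.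
  by rewrite -gtn_sorted_uniq_geq; case/andP: sl.
have geq_trans : transitive geq by move=> a b c /= ba cb; apply: leq_trans cb ba.
rewrite /sp_of_set -[RHS](sorted_sort geq_trans l_sorted).
apply/perm_sortP => //; first by move=> a b; apply: leq_total.
  by move=> a b /andP[/= ba ab]; apply/anti_leq/andP.
apply: uniq_perm => //; first by rewrite map_inj_uniq ?enum_uniq //; exact: val_inj.
move=> x; apply/mapP/idP => [[i ]|lx]; first by rewrite mem_enum inE => ? ->.
by exists (Ordinal (l_bound x lx)); rewrite ?mem_enum ?inE.
Qed.

Lemma leq_psize_size l m : is_strict l -> is_strict m -> contains l m ->
  psize m + size l <= psize l + size m.
Proof.
move=> sl sm lm; have ml := size_contains sm lm; move/containsP: lm => lm.
have size_sum x : is_strict x -> size x <= size l -> size x = \sum_(i < size l) (0 < nth 0 x i).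
  move=> sx xl; rewrite -[in RHS](subnKC xl) big_split_ord /= [X in _ + X]big1 ?addn0; last first.
    by move=> i _; rewrite nth_default // leq_addr.
  rewrite (eq_bigr (fun _ => 1)) ?sum1_card ?card_ord // => i _.
  by rewrite strict_nth_gt0 ?ltn_ord.
rewrite (size_sum l) // (size_sum m) // (psize_sum ml) (psize_sum (leqnn _)) -!big_split.
apply: leq_sum => i _; have := lm i.
by case: (nth 0 m i) => [|a]; case: (nth 0 l i) => [|b] //=; lia.
Qed.

(* Rows are indexed from 0 below, whereas [part] and [skew_boxes] number them from 1. *)
Definition remove_box (v : seq nat) (j : nat) : seq nat :=
  if nth 0 v j == 1 then take j v else set_nth 0 v j (nth 0 v j).-1.

Definition removable (v m : seq nat) (j : nat) : bool :=
  (nth 0 m j < nth 0 v j) && (((nth 0 v j.+1).+1 < nth 0 v j) || (nth 0 v j.+1 == 0)).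

Section RemoveBox.

Variables (v : seq nat) (j : nat).
Hypotheses (sv : is_strict v) (jv : j < size v).

Lemma nth_remove_box r :
  nth 0 (remove_box v j) r = if r == j then (nth 0 v j).-1 else nth 0 v r.
Proof.
rewrite /remove_box; case: ifP => [/eqP vj1|_]; last by rewrite nth_set_nth.
have size_v := strict_last_one sv jv vj1.
have size_take_v : size (take j v) = j by rewrite size_take size_v ltnSn.
case: eqVneq => [->|rj]; first by rewrite nth_default ?vj1 ?size_take_v.
case: (ltnP r j) => [lt_rj|le_jr]; first by rewrite nth_take.
by rewrite !nth_default ?size_take_v ?size_v //; lia.
Qed.

Lemma size_remove_box : size (remove_box v j) = if nth 0 v j == 1 then j else size v.
Proof.
rewrite /remove_box; case: ifP => [/eqP vj1|_]; last by rewrite size_set_nth; lia.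
by rewrite size_take (strict_last_one sv jv vj1) ltnSn.
Qed.

Lemma size_remove_box_le : size (remove_box v j) <= size v.
Proof. by rewrite size_remove_box; case: ifP => // _; apply: ltnW. Qed.

Lemma psize_remove_box : psize (remove_box v j) = (psize v).-1.
Proof.
have vj_gt0 : 0 < nth 0 v j by rewrite strict_nth_gt0.
rewrite /psize /remove_box; case: ifP => [/eqP vj1|_]; last first.
  by rewrite sumn_set_nth_ltn //; lia.
rewrite -{2}(cat_take_drop j v) sumn_cat (drop_nth 0 jv) drop_oversize /=.
  by rewrite vj1 addn0 addn1.
by rewrite (strict_last_one sv jv vj1).
Qed.

Lemma strict_remove_box m : removable v m j -> is_strict (remove_box v j).
Proof.
case/andP=> _ corner; have vj_gt0 : 0 < nth 0 v j by rewrite strict_nth_gt0.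
have size_le r : r < size (remove_box v j) -> r < size v.
  by move/leq_trans; apply; apply: size_remove_box_le.
apply/is_strictP; split=> r r_lt; have r_lt_v := size_le _ r_lt;
  move: r_lt; rewrite size_remove_box !nth_remove_box => r_lt.
  case: eqP => [rj|_]; last by rewrite strict_nth_gt0.
  by move: r_lt; rewrite rj; case: ifP => [_|/eqP]; rewrite ?ltnn //; lia.
case: eqP => [r1j|_].
  by move: jv; rewrite -r1j (ltn_eqF (ltnSn r)) => /(strict_nth_ltS sv); lia.
case: eqP => [rj|_]; last exact: strict_nth_ltS.
move: corner r_lt; rewrite -rj; case: ifP => [_|/eqP]; first by lia.
have := strict_nth_gt0 sv r.+1; lia.
Qed.

Lemma contains_remove_box : contains v (remove_box v j).
Proof. by apply/containsP => r; rewrite nth_remove_box; case: eqP => [->|]; rewrite ?leq_pred. Qed.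

Lemma remove_box_contains m : contains v m -> removable v m j -> contains (remove_box v j) m.
Proof.
move=> /containsP vm /andP[mj _]; apply/containsP => r; rewrite nth_remove_box.
by case: eqP => [->|_]; [move: mj; lia | apply: vm].
Qed.

End RemoveBox.

Lemma remove_box_onto v m l : is_strict v -> is_strict l ->
  psize l = (psize v).-1 -> 0 < psize v -> contains l m -> contains v l ->
  exists2 j, j < size v & removable v m j && (l == remove_box v j).
Proof.
move=> sv sl lv v_gt0 /containsP lm vl; have size_lv := size_contains sl vl.
move/containsP: vl => vl.
have [j [vj v_eq_l]] : exists j : 'I_(size v),
    nth 0 v j = (nth 0 l j).+1 /\ forall i, i != j -> nth 0 v i = nth 0 l i.
  apply: sum_eq_succ => [i|]; first exact: vl.
  by rewrite -!psize_sum // lv prednK.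
have {}v_eq_l (r : nat) : r != j -> nth 0 l r = nth 0 v r.
  move=> rj; case: (ltnP r (size v)) => [rv|vr].
    by rewrite (v_eq_l (Ordinal rv)) //; apply: contraNneq rj => <-.
  by rewrite !nth_default // (leq_trans size_lv).
have j1_neq_j : j.+1 != j by rewrite gtn_eqF.
have rem_j : removable v m j.
  rewrite /removable vj ltnS lm /=; case: eqP => [|/eqP v_j1]; rewrite ?orbT //.
  have j1_l : j.+1 < size l by rewrite -(strict_nth_gt0 sl) v_eq_l // lt0n.
  by have := strict_nth_ltS sl j1_l; rewrite v_eq_l // orbF ltnS.
exists j => //; rewrite rem_j /=; apply/eqP/strict_eq_nth => //.
  exact: strict_remove_box rem_j.
by move=> r; rewrite nth_remove_box //; case: eqP => [->|/eqP]; [rewrite vj | apply: v_eq_l].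
Qed.

Lemma sum_remove_box (R : nmodType) v m (F : seq nat -> R) :
  is_strict v -> contains v m -> 0 < psize v ->
  (\sum_(l <- strict_parts (psize v).-1 | contains l m && contains v l) F l =
   \sum_(j <- iota 0%N (size v) | removable v m j) F (remove_box v j))%R.
Proof.
move=> sv vm v_gt0; rewrite -big_filter.
set rows := [seq j <- iota 0 (size v) | removable v m j].
rewrite [RHS](_ : _ = \sum_(l <- map (remove_box v) rows) F l)%R; last first.
  by rewrite big_map big_filter.
apply/perm_big/uniq_perm.
- by rewrite filter_uniq // strict_parts_uniq.
- rewrite map_inj_in_uniq ?filter_uniq ?iota_uniq // => i i'.
  rewrite !mem_filter !mem_iota /= => /andP[_ iv] /andP[_ i'v] /(congr1 (nth 0 ^~ i)).
  rewrite !nth_remove_box // eqxx; case: eqP => // _.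
  by have := strict_nth_gt0 sv i; rewrite iv; lia.
move=> l; rewrite mem_filter mem_strict_parts; apply/idP/mapP.
  move=> /and3P[/andP[lm vl] sl /eqP lv].
  have [j jv /andP[rem_j /eqP ->]] := remove_box_onto sv sl lv v_gt0 lm vl.
  by exists j; rewrite // mem_filter rem_j mem_iota.
case=> j; rewrite mem_filter mem_iota /= => /andP[rem_j jv] ->; rewrite add0n in jv.
rewrite remove_box_contains ?contains_remove_box ?psize_remove_box //=.
by rewrite eqxx andbT (strict_remove_box sv jv rem_j).
Qed.

Definition skew_row (l m : seq nat) (i : nat) : seq (nat * nat) :=
  [seq (i, j) | j <- iota (i + part m i).+1 (part l i - part m i)].

Definition skew_rows (l m : seq nat) (s : seq nat) : seq (nat * nat) :=
  flatten [seq skew_row l m i | i <- s].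

Lemma mem_skew_row l m i a b :
  ((a, b) \in skew_row l m i) = (a == i) && (i + part m i < b <= i + part l i).
Proof.
apply/mapP/andP => [[j]|[/eqP-> bi]]; last by exists b; rewrite // mem_iota; lia.
by rewrite mem_iota => jb [-> ->]; split; lia.
Qed.

Lemma mem_skew_rows l m s a b :
  ((a, b) \in skew_rows l m s) = (a \in s) && (a + part m a < b <= a + part l a).
Proof.
elim: s => //= i s IH; rewrite mem_cat mem_skew_row IH in_cons [RHS]andb_orl.
by case: eqVneq => [->|].
Qed.

Lemma skew_rows_uniq l m s : uniq s -> uniq (skew_rows l m s).
Proof.
elim: s => //= i s IH /andP[i_s us]; rewrite cat_uniq IH // andbT.
rewrite map_inj_uniq ?iota_uniq => [|? ? [] //]; apply/hasPn => -[a b].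
rewrite mem_skew_rows mem_skew_row => /andP[a_s _]; apply/negP => /andP[/eqP ai _].
by rewrite -ai a_s in i_s.
Qed.

Lemma skew_boxes_iota l m K : size l <= K -> skew_boxes l m = skew_rows l m (iota 1 K).
Proof.
have rows_nil i n : size l < i -> skew_rows l m (iota i n) = [::].
  elim: n i => //= n IH i li.
  change (skew_row l m i ++ skew_rows l m (iota i.+1 n) = [::]).
  rewrite (IH i.+1 (ltnW li)) cats0 /skew_row /part (@nth_default _ 0 l) ?sub0n //; lia.
move=> lK; rewrite -(subnKC lK) iotaD -[skew_rows _ _ _]/(flatten (map _ (_ ++ _))).
by rewrite map_cat flatten_cat -!/(skew_rows l m _) (rows_nil (1 + size l)) ?cats0.
Qed.

Lemma mem_skew_boxes l m a b : ((a, b) \in skew_boxes l m) =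
  [&& 0 < a, a <= size l & a + part m a < b <= a + part l a].
Proof. by rewrite mem_skew_rows mem_iota add1n ltnS -andbA. Qed.

Lemma skew_boxes_uniq l m : uniq (skew_boxes l m).
Proof. exact/skew_rows_uniq/iota_uniq. Qed.

Lemma rem_skew_row l l' m i : part m i < part l i -> part l' i = (part l i).-1 ->
  rem (i, i + part l i) (skew_row l m i) = skew_row l' m i.
Proof.
move=> lt_mi l'i; rewrite /skew_row l'i.
have -> : part l i - part m i = ((part l i).-1 - part m i).+1 by lia.
rewrite -[(_ - _).+1]addn1 iotaD map_cat cats1.
have -> : (i + part m i).+1 + ((part l i).-1 - part m i) = i + part l i by lia.
by rewrite rem_rcons //; apply/mapP => -[j]; rewrite mem_iota => ? [?]; lia.
Qed.

Lemma rem_skew_rows l l' m s i : uniq s -> i \in s -> part m i < part l i ->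
  {in s, forall r, part l' r = if r == i then (part l i).-1 else part l r} ->
  rem (i, i + part l i) (skew_rows l m s) = skew_rows l' m s.
Proof.
elim: s => // a s IH /andP[a_s us] i_as lt_mi l'l.
rewrite -[skew_rows _ _ (a :: s)]/(skew_row l m a ++ skew_rows l m s) rem_cat mem_skew_row.
rewrite -[skew_rows l' _ _]/(skew_row l' m a ++ skew_rows l' m s).
case: (eqVneq a i) => [ai|ai].
  subst a; rewrite leqnn andbT ltn_add2l lt_mi (rem_skew_row (l' := l')) ?l'l ?mem_head ?eqxx //.
  congr (_ ++ _); congr flatten; apply/eq_in_map => r rs.
  by rewrite /skew_row l'l ?in_cons ?rs ?orbT //; case: eqP => // ri; rewrite -ri rs in a_s.
rewrite /= IH //; last by move=> r rs; apply: l'l; rewrite in_cons rs orbT.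
  by rewrite /skew_row l'l ?mem_head // (negbTE ai).
by move: i_as; rewrite in_cons eq_sym (negbTE ai).
Qed.

Definition corner (v : seq nat) (j : nat) : nat * nat := (j.+1, j.+1 + nth 0 v j).

Lemma corner_maximal v m j : is_strict v -> j < size v -> removable v m j ->
  (corner v j \in skew_boxes v m) && box_maximal (skew_boxes v m) (corner v j).
Proof.
move=> sv jv /andP[mj corner_j]; rewrite mem_skew_boxes /part /= jv ltn_add2l mj leqnn /=.
apply/allP => -[[|a] b]; rewrite mem_skew_boxes //= /part /= => /and3P[av _ hi].
rewrite /box_lt /= eqSS negb_or !negb_and -!leqNgt ltnS.
apply/andP; split; first by case: eqP => [->|].
case: eqP => //= b_corner; rewrite leqNgt; apply/negP => ja.
have := strict_nth_gap sv ja av; case/orP: corner_j => [|/eqP vj1]; first by lia.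
by have := strict_nth_gt0 sv j.+1; rewrite vj1 (leq_ltn_trans ja av).
Qed.

Lemma maximal_corner v m b : is_strict v -> is_strict m ->
  b \in skew_boxes v m -> box_maximal (skew_boxes v m) b ->
  exists2 j, j < size v & removable v m j && (b == corner v j).
Proof.
move=> sv sm; case: b => -[|j] c; rewrite mem_skew_boxes //= /part /=.
move=> /and3P[jv lo hi] /allP b_max; exists j => //.
have not_below a' c' : (a', c') \in skew_boxes v m -> box_lt (j.+1, c) (a', c') -> False.
  by move/b_max/negP.
have c_corner : c = j.+1 + nth 0 v j.
  apply/eqP; rewrite eqn_leq hi leqNgt; apply/negP => lt_c.
  apply: (not_below j.+1 c.+1); last by rewrite /box_lt /= eqxx ltnSn.
  by rewrite mem_skew_boxes /part /= jv; lia.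
rewrite /removable /corner c_corner eqxx andbT; apply/andP; split; first lia.
case: (ltnP (nth 0 v j.+1).+1 (nth 0 v j)) => //= v_j1.
rewrite eqn0Ngt; apply/negP => v_j1_gt0.
have j1v : j.+1 < size v by rewrite -(strict_nth_gt0 sv).
have v_ltS := strict_nth_ltS sv j1v.
have m_j1 : nth 0 m j.+1 + 1 < nth 0 v j.
  case: (posnP (nth 0 m j.+1)) => [->|m_j1_gt0]; first by lia.
  have j1m : j.+1 < size m by rewrite -(strict_nth_gt0 sm).
  by have := strict_nth_ltS sm j1m; lia.
apply: (not_below j.+2 c); last by rewrite /box_lt /= eqxx ltnSn orbT.
by rewrite mem_skew_boxes /part /= j1v; lia.
Qed.

Lemma skew_boxes_nonempty v m : is_strict m -> contains v m ->
  psize m < psize v -> 0 < size (skew_boxes v m).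
Proof.
move=> sm vm; have mv := size_contains sm vm; move/containsP: vm => vm.
rewrite (psize_sum mv) (psize_sum (leqnn (size v))) => /ltn_sum_exists[j lt_j].
have : (j.+1, (j.+1 + nth 0 m j).+1) \in skew_boxes v m.
  by rewrite mem_skew_boxes /part /= ltn_ord /=; lia.
by case: (skew_boxes v m).
Qed.

Lemma f_skew_rec v m : is_strict v -> is_strict m -> contains v m -> psize m < psize v ->
  f_skew v m = \sum_(j <- iota 0 (size v) | removable v m j) f_skew (remove_box v j) m.
Proof.
move=> sv sm vm lt_mv.
rewrite f_skewE nstd_rec ?skew_boxes_nonempty ?skew_boxes_uniq // -big_filter.
rewrite (perm_big [seq corner v j | j <- iota 0 (size v) & removable v m j]); last first.
  apply: uniq_perm; rewrite ?filter_uniq ?skew_boxes_uniq //.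
    by rewrite map_inj_uniq ?filter_uniq ?iota_uniq // => i j [].
  move=> b; rewrite mem_filter andbC; apply/idP/mapP => [/andP[b_in b_max]|[j]].
    have [j jv /andP[rem_j /eqP ->]] := maximal_corner sv sm b_in b_max.
    by exists j; rewrite // mem_filter rem_j mem_iota.
  by rewrite mem_filter mem_iota => /andP[rem_j jv] ->; apply: corner_maximal.
rewrite big_map big_filter [LHS]big_seq_cond [RHS]big_seq_cond; apply: eq_bigr => j.
rewrite mem_iota => /andP[/andP[_ jv] rem_j]; rewrite f_skewE.
rewrite (skew_boxes_iota m (leqnn (size v))) (skew_boxes_iota m (size_remove_box_le sv jv)).
congr nstd; apply: rem_skew_rows; rewrite ?iota_uniq ?mem_iota //=; first by case/andP: rem_j.
by case=> [|r]; rewrite mem_iota // => _; rewrite /part /= nth_remove_box // eqSS.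
Qed.

Local Open Scope ring_scope.

Definition Dweight (l lp : seq nat) : Cplx :=
  (contains lp l && (size l < size lp)%N)%:R + 2 * (contains lp l && (size lp == size l)%N)%:R.

Lemma DopE g l : Dop g l = \sum_(lp <- strict_parts (psize l).+1) Dweight l lp * g lp - g l.
Proof.
rewrite /Dop /Dweight; congr (_ - _).
rewrite mulr_sumr big_mkcond [X in _ + X]big_mkcond -big_split /=; apply: eq_bigr => lp _.
by case: (contains lp l); case: (size l < size lp)%N; case: (size lp == size l)%N => /=; ring.
Qed.

(* Deleting a box from a row that stays nonempty lowers the exponent of 2 in [f'_skew] by one,
   which the weight 2 restores; deleting a last row of length 1 leaves it unchanged. *)
Lemma f'_remove_box_Dweight lp m j : is_strict lp -> is_strict m -> contains lp m ->
  (j < size lp)%N -> removable lp m j ->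
  f'_skew (remove_box lp j) m * Dweight (remove_box lp j) lp =
  2 ^+ ((psize lp + size m) - (psize m + size lp)) * (f_skew (remove_box lp j) m)%:R.
Proof.
move=> slp sm lpm jlp rem_j.
have := leq_psize_size (strict_remove_box slp jlp rem_j) sm (remove_box_contains slp jlp lpm rem_j).
have lp_gt0 : (0 < psize lp)%N.
  by rewrite (psize_sum (leqnn _)) (bigD1 (Ordinal jlp)) //= addn_gt0 strict_nth_gt0 ?jlp.
rewrite /f'_skew /Dweight contains_remove_box // psize_remove_box // size_remove_box //.
case: ifP => [/eqP lp_j1|_] ineq.
  rewrite (strict_last_one slp jlp lp_j1) ltnSn gtn_eqF //= mulr0 addr0 mulr1.
  by congr (2 ^+ _ * _); lia.
rewrite ltnn eqxx /= add0r mulr1 mulrAC -exprSr; congr (2 ^+ _ * _); lia.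
Qed.

Lemma sum_f'_Dweight m lp M : is_strict m -> is_strict lp -> psize lp = M.+1 ->
  (psize m <= M)%N ->
  \sum_(l <- strict_parts M | contains l m) f'_skew l m * Dweight l lp =
  if contains lp m then f'_skew lp m else 0.
Proof.
move=> sm slp lpM mM.
rewrite big_mkcond (eq_bigr (fun l => if contains l m && contains lp l
    then f'_skew l m * Dweight l lp else 0)) -?big_mkcond; last first.
  move=> l _; case: (contains l m); case lpl: (contains lp l) => //=.
  by rewrite /Dweight lpl /= mulr0 addr0 mulr0.
case: ifP => lpm; last first.
  rewrite big1_seq // => l /andP[/andP[lm lpl] _].
  by rewrite (contains_trans lpl lm) in lpm.
have -> : M = (psize lp).-1 by rewrite lpM.
rewrite sum_remove_box ?lpM // big_seq_cond.
rewrite (eq_bigr (fun j => 2 ^+ ((psize lp + size m) - (psize m + size lp)) *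
                           (f_skew (remove_box lp j) m)%:R)); last first.
  by move=> j /andP[]; rewrite mem_iota => /andP[_ jlp] rem_j; apply: f'_remove_box_Dweight.
have lt_m_lp : (psize m < psize lp)%N by rewrite lpM ltnS.
by rewrite -big_seq_cond -mulr_sumr -natr_sum -(f_skew_rec slp sm lpm lt_m_lp).
Qed.

Lemma skew_sum_succ mu g n : is_strict mu ->
  skew_sum mu g n.+1 = skew_sum mu g n + skew_sum mu (Dop g) n.
Proof.
move=> smu; rewrite /skew_sum addnS; set M := (psize mu + n)%N.
have -> : \sum_(l <- strict_parts M | contains l mu) f'_skew l mu * Dop g l =
  \sum_(l <- strict_parts M | contains l mu)
     \sum_(lp <- strict_parts M.+1) f'_skew l mu * Dweight l lp * g lp
  - \sum_(l <- strict_parts M | contains l mu) f'_skew l mu * g l.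
  rewrite -sumrB big_seq_cond [RHS]big_seq_cond; apply: eq_bigr => l /andP[].
  rewrite mem_strict_parts => /andP[_ /eqP lM] _.
  by rewrite DopE lM mulrBr mulr_sumr; congr (_ - _); apply: eq_bigr => lp _; rewrite mulrA.
rewrite addrC subrK exchange_big /= big_mkcond big_seq [RHS]big_seq.
apply: eq_bigr => lp; rewrite mem_strict_parts => /andP[slp /eqP lpM].
rewrite -mulr_suml (sum_f'_Dweight smu slp lpM (leq_addr _ _)).
by case: (contains lp mu); rewrite ?mul0r.
Qed.

Local Close Scope ring_scope.

Theorem lemma2p2 (mu : seq nat) (g : seq nat -> Cplx) :
  is_strict mu ->
  forall n : nat,
    skew_sum mu g n = (skew_sum mu g 0 + \sum_(k < n) skew_sum mu (Dop g) k)%R.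
Proof.
move=> smu; elim=> [|n IH]; first by rewrite big_ord0 addr0.
by rewrite skew_sum_succ // IH big_ord_recr /= addrA.
Qed.
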